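(* Let $G$ be a graph with $V(G)=[n]$, $k\ge1$, $H=G^k$, and let $(P,N)=R[H]$ be the sample set defined below. Then every CNF formula consistent with $(P,N)$ has at least $\chi(H)$ clauses.
   Context: $G^k$ is the $k$-fold lexicographic product; its vertices are tuples $\vec u=(u_1,\dots,u_k)\in V(G)^k$, and $\vec u\vec v\in E(G^k)$ iff there is $i$ with $u_j=v_j$ for $j<i$ and $u_iv_i\in E(G)$. For $u\in[n]$ let $\mathrm{enc}(u)=0^{u-1}10^{n-u}\in\{0,1\}^n$, and for an edge $uv$ let $\mathrm{enc}(uv)\in\{0,1\}^n$ have 1s exactly at positions $u$ and $v$. Samples lie in $\{0,1\}^{nk}$ (variables $z(i,u)$, $i\in[k]$, $u\in[n]$, in $k$ blocks). Negative samples: $N=\{\mathrm{enc}(u_1)\cdots\mathrm{enc}(u_k):\vec u\in V(H)\}$. Positive samples: $P=\{\mathrm{enc}(u_1)\cdots\mathrm{enc}(u_{i-1})\,\mathrm{enc}(u_iv)\,\mathrm{enc}(u_{i+1})\cdots\mathrm{enc}(u_k):\vec u\in V(H),\ i\in[k],\ u_iv\in E(G)\}$. A formula is consistent if it is true on all of $P$ and false on all of $N$. $\chi$ is the chromatic number. *)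

From mathcomp Require Import all_boot.

Definition simple_graph {T : finType} (e : rel T) : Prop :=
  symmetric e /\ irreflexive e.

Definition colorable {T : finType} (e : rel T) (c : nat) : bool :=
  [exists f : {ffun T -> 'I_c}, [forall x, forall y, e x y ==> (f x != f y)]].

Lemma colorable_card {T : finType} {e : rel T} :
  irreflexive e -> colorable e #|T|.
Proof.
move=> irr; apply/existsP; exists [ffun x => enum_rank x].
apply/forallP=> x; apply/forallP=> y; apply/implyP=> exy.
rewrite !ffunE; apply/negP=> /eqP/enum_rank_inj Exy.
by move: exy; rewrite Exy irr.
Qed.

Definition chromatic_number {T : finType} {e : rel T} (irr : irreflexive e) : nat :=
  ex_minn (ex_intro (fun c => colorable e c) #|T| (colorable_card irr)).

(* k-fold lexicographic product G^k; vertices are k-tuples, as finite functions. *)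
Definition lexpow_rel {n : nat} (k : nat) (e : rel 'I_n) : rel {ffun 'I_k -> 'I_n} :=
  fun u v => [exists i : 'I_k,
                [forall j : 'I_k, (j < i)%N ==> (u j == v j)] && e (u i) (v i)].

Lemma lexpow_irr {n : nat} (k : nat) {e : rel 'I_n} :
  irreflexive e -> irreflexive (lexpow_rel k e).
Proof.
move=> irr u; rewrite /lexpow_rel; apply/negbTE/negP=> /existsP [i /andP [_]]; by rewrite irr.
Qed.

(* Boolean assignments to the variables z(i,u), i in [k], u in [n]. *)
Definition assignment (n k : nat) := 'I_k -> 'I_n -> bool.

(* Literal: variable (i,u) with polarity b (true = positive literal z(i,u),
   false = negated literal). A clause is a disjunction (list) of literals,
   a CNF formula a conjunction (list) of clauses. *)
Definition literal (n k : nat) := ('I_k * 'I_n * bool)%type.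
Definition clause (n k : nat) := seq (literal n k).
Definition cnf (n k : nat) := seq (clause n k).

Definition eval_lit {n k : nat} (a : assignment n k) (l : literal n k) : bool :=
  a l.1.1 l.1.2 == l.2.
Definition eval_clause {n k : nat} (a : assignment n k) (C : clause n k) : bool :=
  has (eval_lit a) C.
Definition eval_cnf {n k : nat} (a : assignment n k) (phi : cnf n k) : bool :=
  all (eval_clause a) phi.

(* Negative sample enc(u_1)...enc(u_k). *)
Definition neg_sample {n k : nat} (u : {ffun 'I_k -> 'I_n}) : assignment n k :=
  fun j w => w == u j.
(* Positive sample: block i replaced by enc(u_i v). *)
Definition pos_sample {n k : nat} (u : {ffun 'I_k -> 'I_n}) (i : 'I_k) (v : 'I_n)
  : assignment n k :=
  fun j w => if j == i then (w == u i) || (w == v) else w == u j.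

(* Consistency with the sample set R[G^k] = (P, N). *)
Definition consistent {n k : nat} (e : rel 'I_n) (phi : cnf n k) : Prop :=
  (forall (u : {ffun 'I_k -> 'I_n}) (i : 'I_k) (v : 'I_n),
      e (u i) v -> eval_cnf (pos_sample u i v) phi) /\
  (forall u : {ffun 'I_k -> 'I_n}, ~~ eval_cnf (neg_sample u) phi).

From mathcomp Require Import all_boot.

(* Colour a vertex u of G^k by the first clause of phi falsified by the
   negative sample of u.  If u and v are adjacent, they first differ at some
   block i with u_i v_i an edge of G; the positive sample obtained from u by
   also switching on z(i, v_i) lies between neg(u) and neg(u) \/ neg(v), so any
   clause it satisfies is satisfied by neg(u) or neg(v).  Hence u and v cannot
   share a falsified clause, and the colouring is proper with |phi| colours. *)

Set Implicit Arguments.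
Unset Strict Implicit.
Unset Printing Implicit Defensive.

Section Samples.

Variables n k : nat.
Implicit Types (a b c : assignment n k) (C : clause n k) (phi : cnf n k).

Lemma eval_clause_between a b c C :
  (forall j w, b j w -> a j w) -> (forall j w, a j w -> b j w || c j w) ->
  eval_clause a C -> eval_clause b C || eval_clause c C.
Proof.
move=> le_ba le_abc /hasP [[[j w] []] lC]; rewrite /eval_lit /= => /eqP ajw.
- have /orP [bjw | cjw] := le_abc j w ajw.
  + by apply/orP; left; apply/hasP; exists (j, w, true); rewrite /eval_lit ?bjw.
  + by apply/orP; right; apply/hasP; exists (j, w, true); rewrite /eval_lit ?cjw.
- apply/orP; left; apply/hasP; exists (j, w, false) => //.
  by rewrite /eval_lit /=; apply/eqP/negbTE/negP => /le_ba; rewrite ajw.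
Qed.

Lemma neg_sample_le_pos_sample (u : {ffun 'I_k -> 'I_n}) i v j w :
  neg_sample u j w -> pos_sample u i v j w.
Proof. by rewrite /neg_sample /pos_sample; case: (j =P i) => // -> ->. Qed.

Lemma pos_sample_le_neg_sample2 (u v : {ffun 'I_k -> 'I_n}) i j w :
  pos_sample u i (v i) j w -> neg_sample u j w || neg_sample v j w.
Proof.
rewrite /neg_sample /pos_sample; case: (j =P i) => [->|_ -> //].
by case/orP=> ->; rewrite ?orbT.
Qed.

Definition first_falsified a phi : nat := find (fun C => ~~ eval_clause a C) phi.

Lemma first_falsified_lt a phi :
  ~~ eval_cnf a phi -> (first_falsified a phi < size phi)%N.
Proof. by rewrite /eval_cnf -has_predC has_find. Qed.

Lemma first_falsifiedP a phi :
  ~~ eval_cnf a phi -> ~~ eval_clause a (nth [::] phi (first_falsified a phi)).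
Proof. by rewrite /eval_cnf -has_predC => /(nth_find [::]). Qed.

End Samples.

Lemma lexpow_rel_edge n k (e : rel 'I_n) u v :
  lexpow_rel k e u v -> exists i, e (u i) (v i).
Proof. by case/existsP => i /andP [_ uv]; exists i. Qed.

Lemma colorable_lexpow_of_consistent n k (e : rel 'I_n) (phi : cnf n k) :
  consistent e phi -> colorable (lexpow_rel k e) (size phi).
Proof.
case=> pos_sat neg_unsat.
pose col u := first_falsified (neg_sample u) phi.
have col_lt u : (col u < size phi)%N by apply: first_falsified_lt.
apply/existsP; exists [ffun u => Ordinal (col_lt u)].
apply/forallP=> u; apply/forallP=> v; apply/implyP=> /lexpow_rel_edge [i uv].
rewrite !ffunE; apply/negP=> /eqP [] col_uv.
pose C := nth [::] phi (col u).
have Cphi : C \in phi by rewrite mem_nth.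
have not_u : ~~ eval_clause (neg_sample u) C by apply: first_falsifiedP.
have not_v : ~~ eval_clause (neg_sample v) C.
  by rewrite /C col_uv; apply: first_falsifiedP.
have pos_C : eval_clause (pos_sample u i (v i)) C by apply: (allP (pos_sat _ _ _ uv)).
have := eval_clause_between (@neg_sample_le_pos_sample _ _ u i (v i))
          (@pos_sample_le_neg_sample2 _ _ u v i) pos_C.
by rewrite (negbTE not_u) (negbTE not_v).
Qed.

Lemma chromatic_number_le (T : finType) (e : rel T) (irr : irreflexive e) c :
  colorable e c -> (chromatic_number irr <= c)%N.
Proof. by rewrite /chromatic_number; case: ex_minnP => m _; apply. Qed.

Theorem mainTheorem16 (n k : nat) (e : rel 'I_n)
  (Hsym : symmetric e) (Hirr : irreflexive e) (Hk : (1 <= k)%N)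
  (phi : cnf n k) :
  consistent e phi ->
  (chromatic_number (lexpow_irr k Hirr) <= size phi)%N.
Proof.
by move=> /colorable_lexpow_of_consistent; apply: chromatic_number_le.
Qed.
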